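(* For every finite simple graph $G$, the non-cover complex $\mathcal{NC}(G)$ is $(|V(G)|-i\gamma_w(G)-1)$-collapsible.
   Context: $\mathcal{NC}(G)$ is the simplicial complex on $V(G)$ whose faces are the sets $W\subseteq V(G)$ such that $V(G)\setminus W$ contains both endpoints of some edge (if $G$ has no edges it is the void complex). For $A,W\subseteq V(G)$, $W$ weakly dominates $A$ if every $w\in A$ either lies in $W$ or has a neighbor in $W$; $\gamma_w(G;A)$ is the minimum size of a set weakly dominating $A$; the weak independent domination number is $i\gamma_w(G)=\max\{\gamma_w(G;I): I\text{ an independent set of }G\}$. A face of a simplicial complex $X$ is free if it lies in a unique facet; an elementary $d$-collapse deletes all faces containing a free face of size at most $d$; $X$ is $d$-collapsible if the void complex is reachable by finitely many elementary $d$-collapses. *)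

From HB Require Import structures.
From mathcomp Require Import all_boot all_order all_algebra.
Set Implicit Arguments. Unset Strict Implicit. Unset Printing Implicit Defensive.
Import Order.TTheory GRing.Theory Num.Theory.

(* A finite simple graph: vertex type T : finType with a symmetric,
   irreflexive adjacency relation e. *)

Section Defs.
Variable T : finType.

(* Non-cover complex NC(G): faces are W such that V \ W contains both
   endpoints of some edge.  (Void = empty family when G has no edges.) *)
Definition noncover_complex (e : rel T) : {set {set T}} :=
  [set W : {set T} | [exists x : T, [exists y : T,
      [&& x \notin W, y \notin W & e x y]]]].

Definition weakly_dominates (e : rel T) (W A : {set T}) : bool :=
  [forall w in A, (w \in W) || [exists u in W, e w u]].

(* gamma_w(G;A): minimum size of a set weakly dominating A
   ([set: T] always weakly dominates A). *)
Definition gamma_w (e : rel T) (A : {set T}) : nat :=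
  #|[arg min_(W < [set: T] | weakly_dominates e W A) #|W|]|.

Definition independent (e : rel T) (I : {set T}) : bool :=
  [forall x in I, forall y in I, ~~ e x y].

Definition i_gamma_w (e : rel T) : nat :=
  \max_(I : {set T} | independent e I) gamma_w e I.

Definition facet (X : {set {set T}}) (F : {set T}) : bool :=
  (F \in X) && [forall G in X, (F \subset G) ==> (G == F)].

Definition free_face (X : {set {set T}}) (s : {set T}) : bool :=
  (s \in X) && (#|[set F in X | facet X F & s \subset F]| == 1)%N.

Definition collapse (X : {set {set T}}) (s : {set T}) : {set {set T}} :=
  [set t in X | ~~ (s \subset t)].

Inductive d_collapsible (d : int) : {set {set T}} -> Prop :=
| dcol_void : d_collapsible d set0
| dcol_step (X : {set {set T}}) (s : {set T}) :
    free_face X s -> (#|s|%:Z <= d)%R ->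
    d_collapsible d (collapse X s) -> d_collapsible d X.

End Defs.

(* We generalise NC(G) to a relative complex
   rel_noncover V L, whose faces are the W ⊆ V such that V \ W contains a
   vertex of the forbidden set L or both ends of an edge; NC(G) is the
   case V = all vertices, L = ∅.  For v ∈ V this complex splits as
     (faces avoiding v) ∪ cone v (rel_noncover (V \ v) L),
   where the faces avoiding v form a simplex if v ∈ L and otherwise the
   complex rel_noncover (V \ v) (L ∪ N(v)).  A general gluing lemma for
   cones then shows by induction on |V| that the complex is
   d-collapsible whenever some independent set I ⊆ V disjoint from L needs
   at least |V| - 1 - d vertices to be dominated modulo L (the recursion
   always removes a vertex outside I; if V ⊆ I the complex is void).  For
   NC(G) we take I attaining iγ_w(G). *)

From HB Require Import structures.
From mathcomp Require Import all_boot all_order all_algebra zify.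
Import Order.TTheory GRing.Theory Num.Theory.
Set Implicit Arguments. Unset Strict Implicit. Unset Printing Implicit Defensive.

Section Cones.
Variable T : finType.
Implicit Types (X Y D : {set {set T}}) (s t W : {set T}) (v : T).

Definition avoids v X : Prop := forall W, W \in X -> v \notin W.

Definition cone v Y : {set {set T}} := [set W : {set T} | (v \in W) && (W :\ v \in Y)].

Lemma in_cone_setU1 v Y t : v \notin t -> (v |: t \in cone v Y) = (t \in Y).
Proof. by move=> vt; rewrite inE setU11 setU1K. Qed.

Lemma avoids_cone v Y D W : avoids v D -> W \in D :|: cone v Y -> v \in W ->
  W :\ v \in Y.
Proof. by move=> hD; rewrite !inE => /orP[/hD/negPf-> | /andP[_ ->]]. Qed.

Lemma setU1_subset v s W : v \in W -> v \notin s -> (v |: s \subset W) = (s \subset W :\ v).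
Proof. by move=> vW vs; rewrite subUset sub1set vW subsetD1 vs andbT. Qed.

Lemma facet_cone v Y D t : avoids v Y -> avoids v D -> v \notin t ->
  facet (D :|: cone v Y) (v |: t) = facet Y t.
Proof.
move=> hY hD vt; rewrite /facet inE in_cone_setU1 //.
have -> : (v |: t \in D) = false by apply/negbTE/negP => /hD; rewrite setU11.
case tY: (t \in Y) => //=; apply/forallP/forallP => maxt G; apply/implyP => GX.
- apply/implyP => tG; have vG := hY _ GX.
  have := maxt (v |: G); rewrite inE in_cone_setU1 // GX orbT setUS //=.
  by move=> /eqP/(congr1 (fun A => A :\ v)); rewrite !setU1K // => ->.
- have [vG | nvG] := boolP (v \in G); last first.
    by apply/implyP => /subsetP/(_ v (setU11 _ _)); rewrite (negPf nvG).
  rewrite setU1_subset //; apply/implyP => tG.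
  have := maxt (G :\ v); rewrite (avoids_cone hD GX vG) tG /= => /eqP <-.
  by rewrite setD1K.
Qed.

Lemma collapse_cone v Y D s : avoids v D -> v \notin s ->
  collapse (D :|: cone v Y) (v |: s) = D :|: cone v (collapse Y s).
Proof.
move=> hD vs; apply/setP => W; rewrite /collapse /cone !inE.
case WD: (W \in D) => /=.
  by apply/negP => /subsetP/(_ v (setU11 _ _)); rewrite (negPf (hD _ WD)).
by case vW: (v \in W); rewrite //= setU1_subset // andbC.
Qed.

Lemma free_cone v Y D s : avoids v Y -> avoids v D -> v \notin s ->
  free_face Y s -> free_face (D :|: cone v Y) (v |: s).
Proof.
move=> hY hD vs /andP[sY /cards1P[t0 Et0]].
have : t0 \in [set F in Y | facet Y F & s \subset F] by rewrite Et0 set11.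
rewrite inE => /and3P[t0Y ft0 st0]; have vt0 := hY _ t0Y.
apply/andP; split; first by rewrite inE in_cone_setU1 // sY orbT.
apply/cards1P; exists (v |: t0); apply/setP => F; rewrite in_set1 inE.
apply/idP/eqP => [/and3P[FX fF sF] | ->]; last first.
  by rewrite facet_cone // inE in_cone_setU1 // t0Y ft0 orbT setUS.
have vF : v \in F by move/subsetP: sF; apply; rewrite setU11.
have defF : F = v |: (F :\ v) by rewrite setD1K.
have : F :\ v \in [set F in Y | facet Y F & s \subset F].
  rewrite inE (avoids_cone hD FX vF) -setU1_subset // sF andbT.
  by rewrite -(facet_cone hY hD) ?setD11 // -defF.
by rewrite Et0 inE => /eqP <-.
Qed.

(* Gluing: if Y is d-collapsible and D is (d+1)-collapsible, both avoiding
   v, then D :|: cone v Y is (d+1)-collapsible; the collapses of Y are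
   performed on the cone first, after which only D is left. *)
Lemma cone_collapsible (d : int) v Y D : d_collapsible d Y -> avoids v Y ->
  avoids v D -> d_collapsible (d + 1) D -> d_collapsible (d + 1) (D :|: cone v Y).
Proof.
move=> cY; elim: cY D => [|X s fs sd _ IH] D hX hD cD.
  suff -> : cone v set0 = set0 by rewrite setU0.
  by apply/setP => W; rewrite !inE andbF.
have vs : v \notin s by case/andP: fs => /hX.
apply: (@dcol_step _ _ _ (v |: s)); first exact: free_cone.
  by rewrite cardsU1 vs; lia.
rewrite collapse_cone //; apply: IH => // W; rewrite inE => /andP[WX _]; exact: hX.
Qed.

(* A simplex (the full powerset of V) collapses from its empty face. *)
Lemma simplex_collapsible (V : {set T}) (d : int) : (0 <= d)%R ->
  d_collapsible d (powerset V).
Proof.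
move=> d_ge0; apply: (@dcol_step _ _ _ set0).
- rewrite /free_face !inE sub0set /=; apply/cards1P; exists V; apply/setP => F.
  rewrite !inE sub0set andbT /facet !inE.
  apply/idP/eqP => [/and3P[FV _ /forallP/(_ V)] | ->].
    by rewrite !inE subxx FV => /eqP.
  rewrite subxx /=; apply/forallP => G; rewrite !inE.
  by apply/implyP => GV; apply/implyP => VG; rewrite eqEsubset GV VG.
- by rewrite cards0.
- suff -> : collapse (powerset V) set0 = set0 by exact: dcol_void.
  by apply/setP => W; rewrite !inE sub0set andbF.
Qed.

End Cones.

Section RelativeNoncover.
Variable T : finType.
Variable e : rel T.
Hypothesis e_sym : symmetric e.
Hypothesis e_irr : irreflexive e.
Implicit Types (V L S W I J : {set T}) (v : T).

Definition meets_or_spans L S : bool :=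
  [exists x in S, (x \in L) || [exists y in S, e x y]].

Lemma meets_or_spans_setU1 L S v : v \notin S ->
  meets_or_spans L (v |: S) = (v \in L) || meets_or_spans (L :|: [set y | e v y]) S.
Proof.
move=> vS; apply/existsP/idP => [[x] | ].
  rewrite in_setU1 => /andP[/orP[/eqP-> | xS] /orP[xL | /existsP[y]]].
  - by rewrite xL.
  - rewrite in_setU1 => /andP[/orP[/eqP-> | yS] evy]; first by rewrite e_irr in evy.
    by apply/orP; right; apply/existsP; exists y; rewrite yS !inE evy orbT.
  - by apply/orP; right; apply/existsP; exists x; rewrite xS inE xL.
  - rewrite in_setU1 => /andP[/orP[/eqP-> | yS] exy]; apply/orP; right.
      by apply/existsP; exists x; rewrite xS !inE e_sym exy orbT.
    by apply/existsP; exists x; rewrite xS; apply/orP; right; apply/existsP; exists y; rewrite yS.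
case/orP => [vL | /existsP[x /andP[xS /orP[] ]]]; first by exists v; rewrite setU11 vL.
- rewrite !inE => /orP[xL | evx]; first by exists x; rewrite in_setU1 xS orbT xL.
  by exists v; rewrite setU11 /=; apply/orP; right; apply/existsP; exists x; rewrite in_setU1 xS orbT.
- case/existsP => y /andP[yS exy]; exists x; rewrite in_setU1 xS orbT /=.
  by apply/orP; right; apply/existsP; exists y; rewrite in_setU1 yS orbT.
Qed.

Lemma independent_not_meets_or_spans L S I : S \subset I -> [disjoint I & L] ->
  independent e I -> ~~ meets_or_spans L S.
Proof.
move=> SI IL /forallP indI; apply/existsP => -[x /andP[xS /orP[xL | /existsP[y /andP[yS exy]]]]].
  by rewrite (disjointFr IL (subsetP SI _ xS)) in xL.
have /forallP/(_ y) := implyP (indI x) (subsetP SI _ xS).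
by rewrite (subsetP SI _ yS) exy.
Qed.

Definition rel_noncover V L : {set {set T}} :=
  [set W : {set T} | (W \subset V) && meets_or_spans L (V :\: W)].

Lemma noncover_rel_noncover : noncover_complex e = rel_noncover [set: T] set0.
Proof.
apply/setP => W; rewrite !inE subsetT /=.
apply/existsP/existsP => [[x /existsP[y /and3P[xW yW exy]]] | [x]].
  exists x; rewrite !inE andbT xW /=; apply/existsP; exists y.
  by rewrite !inE andbT yW.
rewrite !inE andbT => /andP[xW /existsP[y]]; rewrite !inE andbT => /andP[yW exy].
by exists x; apply/existsP; exists y; rewrite xW yW.
Qed.

Lemma rel_noncover_with v V L W : v \in V -> v \in W ->
  (W \in rel_noncover V L) = (W :\ v \in rel_noncover (V :\ v) L).
Proof.
move=> vV vW; rewrite !inE; have -> : (V :\ v) :\: (W :\ v) = V :\: W.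
  by apply/setP => x; rewrite !inE; case: (x =P v) => [->|]; rewrite ?vW.
by rewrite subsetD1 setD11 andbT -{1}(setD1K vW) subUset sub1set vV.
Qed.

Definition rel_noncover_deletion V L v : {set {set T}} :=
  if v \in L then powerset (V :\ v)
  else rel_noncover (V :\ v) (L :|: [set y | e v y]).

Lemma rel_noncover_without v V L W : v \in V -> v \notin W ->
  (W \in rel_noncover V L) = (W \in rel_noncover_deletion V L v).
Proof.
move=> vV vW; have defVW : V :\: W = v |: ((V :\ v) :\: W).
  by apply/setP => x; rewrite !inE; case: (x =P v) => [->|]; rewrite ?vV ?(negPf vW).
rewrite /rel_noncover_deletion inE defVW meets_or_spans_setU1; last by rewrite !inE eqxx andbF.
have sub : (W \subset V :\ v) = (W \subset V) by rewrite subsetD1 vW andbT.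
by case: (v \in L); rewrite !inE sub ?andbT.
Qed.

Lemma rel_noncover_split v V L : v \in V ->
  rel_noncover V L = rel_noncover_deletion V L v :|: cone v (rel_noncover (V :\ v) L).
Proof.
move=> vV; apply/setP => W; rewrite in_setU [W \in cone _ _]inE.
have [vW | vW] := boolP (v \in W); last by rewrite (rel_noncover_without _ vV vW) // orbF.
rewrite (rel_noncover_with _ vV vW) /= /rel_noncover_deletion.
by case: (v \in L); rewrite !inE [W \subset _]subsetD1 vW andbF.
Qed.


Lemma rel_noncover_void V L I : V \subset I -> [disjoint I & L] ->
  independent e I -> rel_noncover V L = set0.
Proof.
move=> VI IL indI; apply/setP => W; rewrite !inE.
by rewrite (negPf (independent_not_meets_or_spans (subset_trans (subsetDl V W) VI) IL indI)) andbF.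
Qed.

Lemma avoids_rel_noncover v V L : avoids v (rel_noncover (V :\ v) L).
Proof. by move=> W; rewrite inE subsetD1 => /andP[/andP[]]. Qed.

Lemma avoids_deletion v V L : avoids v (rel_noncover_deletion V L v).
Proof.
rewrite /rel_noncover_deletion; case: (v \in L); last exact: avoids_rel_noncover.
by move=> W; rewrite inE subsetD1 => /andP[].
Qed.

Lemma independent_subset I J : J \subset I -> independent e I -> independent e J.
Proof.
move=> JI /forallP indI; apply/forallP => x; apply/implyP => xJ.
apply/forallP => y; apply/implyP => yJ.
have /forallP/(_ y) := implyP (indI x) (subsetP JI _ xJ).
by rewrite (subsetP JI _ yJ).
Qed.

Definition dominates_mod L W I : bool :=
  [forall a in I, [|| a \in W, a \in L | [exists u in W, e a u]]].

(* Adding v to W dominates the neighbours of v. *)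
Lemma dominates_mod_setU1 v L W I :
  dominates_mod (L :|: [set y | e v y]) W (I :\: [set y | e v y]) ->
  dominates_mod L (v |: W) I.
Proof.
move=> /forallP domW; apply/forallP => a; apply/implyP => aI.
have [eva | neva] := boolP (e v a).
  by apply/orP; right; apply/orP; right; apply/existsP; exists v; rewrite setU11 e_sym.
have aIv : a \in I :\: [set y | e v y] by rewrite !inE (negPf neva).
have /or3P[aW | aL | /existsP[u /andP[uW eau]]] := implyP (domW a) aIv.
- by rewrite in_setU1 aW orbT.
- by move: aL; rewrite !inE (negPf neva) orbF => ->; rewrite orbT.
- by apply/orP; right; apply/orP; right; apply/existsP; exists u; rewrite in_setU1 uW orbT.
Qed.

Definition collapsibility_witness V L (d : int) I : Prop :=
  [/\ I \subset V, [disjoint I & L], independent e I &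
      forall W, dominates_mod L W I -> (#|V|%:Z - 1 - d <= #|W|%:Z)%R].

Lemma witness_link v V L d I : v \in V -> v \notin I ->
  collapsibility_witness V L d I -> collapsibility_witness (V :\ v) L (d - 1) I.
Proof.
move=> vV vI [IV IL indI bound]; split=> // [|W /bound]; first by rewrite subsetD1 IV vI.
by rewrite (cardsD1 v V) vV; lia.
Qed.

Lemma witness_deletion v V L d I : v \in V -> v \notin I ->
  collapsibility_witness V L d I ->
  collapsibility_witness (V :\ v) (L :|: [set y | e v y]) d (I :\: [set y | e v y]).
Proof.
move=> vV vI [IV IL indI bound]; split.
- by apply: subset_trans (subsetDl _ _) _; rewrite subsetD1 IV vI.
- rewrite -setI_eq0; apply/eqP/setP => x; rewrite !inE.
  case: (e v x) => //=; rewrite orbF.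
  by case xI: (x \in I); rewrite //= (disjointFr IL xI).
- exact: independent_subset (subsetDl _ _) indI.
- move=> W /dominates_mod_setU1 /bound; rewrite (cardsD1 v V) vV cardsU1; lia.
Qed.

(* A vertex of V outside I forces d >= 0: I dominates itself. *)
Lemma witness_nonneg v V L d I : v \in V -> v \notin I ->
  collapsibility_witness V L d I -> (0 <= d)%R.
Proof.
move=> vV vI [IV _ _ bound].
have /bound : dominates_mod L I I by apply/forallP => a; apply/implyP => ->.
have : #|I| <= #|V :\ v| by apply: subset_leq_card; rewrite subsetD1 IV vI.
rewrite (cardsD1 v V) vV; lia.
Qed.

Theorem rel_noncover_collapsible V L d I :
  collapsibility_witness V L d I -> d_collapsible d (rel_noncover V L).
Proof.
have [n] := ubnP #|V|; elim: n V L d I => // n IH V L d I ltVn wit.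
have [_ IL indI _] := wit.
have [VI | /subsetPn[v vV vI]] := boolP (V \subset I).
  by rewrite (rel_noncover_void VI IL indI); exact: dcol_void.
have ltVvn : #|V :\ v| < n by move: ltVn; rewrite (cardsD1 v V) vV.
rewrite (rel_noncover_split L vV) -(subrK 1%R d).
apply: cone_collapsible; [exact: IH (witness_link vV vI wit) | exact: avoids_rel_noncover
  | exact: avoids_deletion | rewrite subrK /rel_noncover_deletion].
case: ifP => vL; first exact: simplex_collapsible (witness_nonneg vV vI wit).
exact: IH (witness_deletion vV vI wit).
Qed.

End RelativeNoncover.

Section WeakDomination.
Variable T : finType.
Variable e : rel T.

Lemma gamma_w_min (A W : {set T}) : weakly_dominates e W A -> gamma_w e A <= #|W|.
Proof.
rewrite /gamma_w; case: arg_minnP => [|W0 _ minW0 domW]; last exact: minW0.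
by apply/forallP => a; apply/implyP => _; rewrite in_setT.
Qed.

(* The maximum defining i_gamma_w is attained (set0 is independent). *)
Lemma i_gamma_w_attained :
  {I : {set T} | independent e I & i_gamma_w e = gamma_w e I}.
Proof.
apply: eq_bigmax_cond; apply/card_gt0P; exists set0.
by rewrite unfold_in; apply/forallP => x; rewrite inE.
Qed.

Lemma dominates_mod0 (W I : {set T}) : dominates_mod e set0 W I -> weakly_dominates e W I.
Proof.
move=> /forallP domW; apply/forallP => a; apply/implyP => aI.
by have := implyP (domW a) aI; rewrite inE.
Qed.

End WeakDomination.

Theorem corollary3p1 (T : finType) (e : rel T)
    (e_sym : symmetric e) (e_irr : irreflexive e) :
  d_collapsible (#|T|%:Z - (i_gamma_w e)%:Z - 1)%R (noncover_complex e).
Proof.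
rewrite noncover_rel_noncover.
have [I indI ->] := i_gamma_w_attained e.
apply: (rel_noncover_collapsible e_sym e_irr (I := I)); split.
- exact: subsetT.
- by rewrite -setI_eq0 setI0.
- exact: indI.
- by move=> W /dominates_mod0/gamma_w_min; rewrite cardsT; lia.
Qed.
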